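(* Consider any economy $\mathcal{E}$ (as in the context). If firm $f$ and worker $w$ form a top-top match in state $\theta$ (i.e. in market $\mathcal{M}(\theta)$, $w$ is $f$'s favorite worker among all workers and $f$ is $w$'s favorite firm among all firms), then $f$ and $w$ are matched to each other in state $\theta$ under every BNE (with truthfully reporting firms).
   Context: Matching market: $(F,W,U)$ with finite firms, finite workers, utilities of each firm from each worker and each worker from each firm; unmatched utility $0$; all preferences strict; all pairs mutually acceptable. An economy is $\mathcal{E}=(F,W,\{U(\theta)\}_{\theta\in\Theta},\Theta,\Psi)$ with finite state set $\Theta$, full-support prior $\Psi$, market $\mathcal{M}(\theta)=(F,W,U(\theta))$ in state $\theta$; workers' utilities are state-independent, firms' may depend on $\theta$; each $\mathcal{M}(\theta)$ has a unique stable matching. Game: state drawn by $\Psi$; firms observe it; each worker knows only his own preferences; all simultaneously submit rank-ordered lists of acceptable partners; firm-proposing Deferred Acceptance is run on the reports. Firms report truthfully; a worker's strategy is one list; a BNE is a profile in which each worker's list maximizes his expected utility under $\Psi$ given the others' strategies. *)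

From mathcomp Require Import all_boot all_order all_algebra.
Set Implicit Arguments. Unset Strict Implicit. Unset Printing Implicit Defensive.
Import Order.TTheory GRing.Theory Num.Theory.
Local Open Scope ring_scope.

Section Matching.
Variables (R : realFieldType) (F W : finType).

(* Truthful firm report: all workers (all acceptable), ranked by decreasing utility. *)
Definition firm_list (uf : F -> W -> R) (f : F) : seq W :=
  sort (fun a b => uf f b <= uf f a) (enum W).

(* PF f : firm f's rank-ordered list of acceptable workers;
   PW w : worker w's rank-ordered list of acceptable firms.
   State k f = number of workers on f's list to whom f has proposed so far. *)
Section DA.
Variables (PF : F -> seq W) (PW : W -> seq F).

Definition proposed (k : {ffun F -> nat}) (f : F) (w : W) : bool :=
  w \in take (k f) (PF f).

Definition cands (k : {ffun F -> nat}) (w : W) (f : F) : bool :=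
  proposed k f w && (f \in PW w).

Definition held (k : {ffun F -> nat}) (w : W) : option F :=
  [pick f | cands k w f &&
     [forall g, cands k w g ==> (index f (PW w) <= index g (PW w))%N]].

Definition is_held (k : {ffun F -> nat}) (f : F) : bool :=
  [exists w, held k w == Some f].

Definition da_step (k : {ffun F -> nat}) : {ffun F -> nat} :=
  [ffun f => if ~~ is_held k f && (k f < size (PF f))%N then (k f).+1 else k f].

(* enough rounds to reach the fixpoint (total proposals <= sum of list sizes) *)
Definition da_final : {ffun F -> nat} :=
  iter (\sum_(f : F) size (PF f)).+1 da_step [ffun => 0%N].

Definition da_outcome (w : W) : option F := held da_final w.
End DA.

Definition wutil (uW : W -> F -> R) (w : W) (o : option F) : R :=
  if o is Some f then uW w f else 0.

Definition deviate (sigma : {ffun W -> seq F}) (w : W) (s : seq F) :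
  {ffun W -> seq F} := [ffun w' => if w' == w then s else sigma w'].

Definition exp_util (Th : finType) (uF : Th -> F -> W -> R) (uW : W -> F -> R)
    (Psi : Th -> R) (sigma : {ffun W -> seq F}) (w : W) : R :=
  \sum_(th : Th) Psi th * wutil uW w (da_outcome (firm_list (uF th)) sigma w).

(* Bayes-Nash equilibrium among workers (firms report truthfully). *)
Definition is_BNE (Th : finType) (uF : Th -> F -> W -> R) (uW : W -> F -> R)
    (Psi : Th -> R) (sigma : {ffun W -> seq F}) : Prop :=
  (forall w, uniq (sigma w)) /\
  forall (w : W) (s : seq F), uniq s ->
    exp_util uF uW Psi (deviate sigma w s) w <= exp_util uF uW Psi sigma w.

Definition is_matching (mu : {ffun W -> option F}) : Prop :=
  forall w1 w2 f, mu w1 = Some f -> mu w2 = Some f -> w1 = w2.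

Definition futil (uf : F -> W -> R) (mu : {ffun W -> option F}) (f : F) : R :=
  if [pick w | mu w == Some f] is Some w then uf f w else 0.

Definition individually_rational (uf : F -> W -> R) (uW : W -> F -> R)
    (mu : {ffun W -> option F}) : Prop :=
  forall w f, mu w = Some f -> 0 <= uW w f /\ 0 <= uf f w.

Definition blocking (uf : F -> W -> R) (uW : W -> F -> R)
    (mu : {ffun W -> option F}) (f : F) (w : W) : Prop :=
  wutil uW w (mu w) < uW w f /\ futil uf mu f < uf f w.

Definition stable (uf : F -> W -> R) (uW : W -> F -> R)
    (mu : {ffun W -> option F}) : Prop :=
  [/\ is_matching mu, individually_rational uf uW mu &
      forall f w, ~ blocking uf uW mu f w].

Definition unique_stable (uf : F -> W -> R) (uW : W -> F -> R) : Prop :=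
  (exists mu, stable uf uW mu) /\
  forall mu1 mu2, stable uf uW mu1 -> stable uf uW mu2 -> mu1 = mu2.

End Matching.

From mathcomp Require Import all_boot all_order all_algebra.
Import Order.TTheory GRing.Theory Num.Theory.
Set Implicit Arguments. Unset Strict Implicit. Unset Printing Implicit Defensive.

(* Suppose w is not matched to f in state th.  Let w deviate by moving f to
   the head of his list.  In any state, either f proposes to w at some round of
   deferred acceptance — and then w holds f from that round on — or f never
   does, and the run is identical to the original one.  Since f is w's
   favourite firm the deviation never hurts w, and in state th, where w is f's
   favourite worker, f proposes to w in the first round, so w strictly gains.
   Full support of the prior makes the deviation profitable, contradicting the
   equilibrium. *)

Definition promote (T : eqType) (x : T) (s : seq T) : seq T :=
  x :: filter (predC1 x) s.

Lemma promote_uniq (T : eqType) (x : T) (s : seq T) :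
  uniq s -> uniq (promote x s).
Proof. by move=> s_uniq; rewrite /= mem_filter /= eqxx filter_uniq. Qed.

Lemma leq_index_filter (T : eqType) (p : pred T) (s : seq T) (x y : T) :
  p x -> p y -> x \in s -> y \in s ->
  (index x (filter p s) <= index y (filter p s))%N = (index x s <= index y s)%N.
Proof.
move=> px py; elim: s => //= z s IH; rewrite !inE.
have [->|nzx] := eqVneq z x; first by rewrite px /= eqxx.
have [zy|nzy] := eqVneq z y; first by subst z; rewrite py /= eqxx (negbTE nzx).
move=> xs ys; case: (p z) => /=; last exact: IH.
by rewrite (negbTE nzx) (negbTE nzy) ltnS IH.
Qed.

Local Open Scope ring_scope.

Lemma firm_list_top (R : realFieldType) (F W : finType) (uf : F -> W -> R)
    (f : F) (w : W) :
  injective (uf f) -> (forall w', uf f w' <= uf f w) ->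
  exists s, firm_list uf f = w :: s.
Proof.
move=> uf_inj w_top.
have w_in : w \in firm_list uf f by rewrite mem_sort mem_enum.
have sorted_list : sorted (fun a b => uf f b <= uf f a) (firm_list uf f).
  by apply: sort_sorted => a b; exact: le_total.
move: w_in sorted_list; case: (firm_list uf f) => [//|top s] w_in sorted_list.
exists s; congr (_ :: _); apply: uf_inj; apply/eqP; rewrite eq_le w_top /=.
move: w_in; rewrite inE => /predU1P [-> //|w_in].
have decr_trans : transitive (fun a b => uf f b <= uf f a).
  by move=> b a c ba cb; exact: le_trans cb ba.
exact: (allP (order_path_min decr_trans sorted_list)).
Qed.

Local Close Scope ring_scope.

Section DeferredAcceptance.
Variables (F W : finType) (PF : F -> seq W) (PW : W -> seq F).

Lemma proposed_le (k k' : {ffun F -> nat}) (g : F) (v : W) :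
  k g <= k' g -> proposed PF k g v -> proposed PF k' g v.
Proof.
rewrite /proposed => le_kk' v_in; have v_PF := mem_take v_in.
by move: v_in; rewrite !(in_take _ v_PF) => lt_v; exact: leq_trans le_kk'.
Qed.

Lemma proposed_head (k : {ffun F -> nat}) (g : F) (v : W) (s : seq W) :
  PF g = v :: s -> 0 < k g -> proposed PF k g v.
Proof. by rewrite /proposed => ->; case: (k g) => //= n _; exact: mem_head. Qed.

Lemma da_step_ge (k : {ffun F -> nat}) (g : F) : k g <= da_step PF PW k g.
Proof. by rewrite ffunE; case: ifP. Qed.

Lemma iter_da_step_ge (n : nat) (k : {ffun F -> nat}) (g : F) :
  k g <= iter n (da_step PF PW) k g.
Proof. by elim: n => //= n IH; exact: leq_trans IH (da_step_ge _ _). Qed.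

Lemma held0 (v : W) : held PF PW [ffun => 0] v = None.
Proof.
rewrite /held; case: pickP => // g /andP [/andP []].
by rewrite /proposed ffunE take0.
Qed.

Lemma da_final_gt0 (g : F) : 0 < size (PF g) -> 0 < da_final PF PW g.
Proof.
move=> PF_g_gt0; rewrite /da_final iterSr.
apply: leq_trans (iter_da_step_ge _ _ _); rewrite ffunE.
have -> : is_held PF PW [ffun => 0] g = false.
  by apply/existsP => -[v]; rewrite held0.
by rewrite ffunE PF_g_gt0.
Qed.

End DeferredAcceptance.

Section PromoteFirm.
Variables (F W : finType) (PF : F -> seq W) (PW PW' : W -> seq F).
Variables (f : F) (w : W).
Hypothesis PW'_w : PW' w = promote f (PW w).
Hypothesis PW'_other : forall v, v != w -> PW' v = PW v.

Lemma held_promoted (k : {ffun F -> nat}) :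
  proposed PF k f w -> held PF PW' k w = Some f.
Proof.
move=> proposed_fw.
have cands_f : cands PF PW' k w f by rewrite /cands proposed_fw PW'_w mem_head.
rewrite /held; case: pickP => [g /andP [_ /forallP /(_ f)]|]; last first.
  move/(_ f); rewrite cands_f /=; case/forallP => g.
  by rewrite PW'_w /= eqxx implybT.
by rewrite cands_f PW'_w /= eqxx; case: eqP => [->|].
Qed.

Lemma held_unpromoted (k : {ffun F -> nat}) :
  ~~ proposed PF k f w -> held PF PW' k =1 held PF PW k.
Proof.
move=> not_proposed v; have [->|nvw] := eqVneq v w; last first.
  by rewrite /held /cands PW'_other.
have same_cands h : cands PF PW' k w h = cands PF PW k w h.
  rewrite /cands PW'_w inE mem_filter /=.
  by have [->|] := eqVneq h f; first by rewrite (negbTE not_proposed).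
have not_f h : cands PF PW k w h -> h != f.
  by case/andP=> proposed_h _; apply: contraNneq not_proposed => <-.
rewrite /held; apply: eq_pick => g /=; rewrite same_cands.
case cands_g: (cands PF PW k w g) => //=; apply: eq_forallb => h.
rewrite same_cands; case cands_h: (cands PF PW k w h) => //=.
rewrite PW'_w /= eq_sym (negbTE (not_f _ cands_g)) eq_sym (negbTE (not_f _ cands_h)).
rewrite ltnS leq_index_filter //=; [exact: not_f | exact: not_f | |].
- by case/andP: cands_g.
- by case/andP: cands_h.
Qed.

Lemma da_step_unpromoted (k : {ffun F -> nat}) :
  ~~ proposed PF k f w -> da_step PF PW' k = da_step PF PW k.
Proof.
move=> not_proposed; apply/ffunP => g; rewrite !ffunE /is_held.
by under eq_existsb => v do rewrite held_unpromoted //.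
Qed.

Lemma iter_da_step_unpromoted (n : nat) (k : {ffun F -> nat}) :
  ~~ proposed PF (iter n (da_step PF PW') k) f w ->
  iter n (da_step PF PW') k = iter n (da_step PF PW) k.
Proof.
elim: n => //= n IH not_proposed.
have not_proposed_n : ~~ proposed PF (iter n (da_step PF PW') k) f w.
  by apply: contra not_proposed; apply: proposed_le; exact: da_step_ge.
by rewrite da_step_unpromoted // IH.
Qed.

Lemma da_outcome_promoted :
  da_outcome PF PW' w = Some f \/ da_outcome PF PW' w = da_outcome PF PW w.
Proof.
rewrite /da_outcome /da_final; move: _.+1 [ffun => 0] => n k.
have [proposed_fw|not_proposed] := boolP (proposed PF (iter n (da_step PF PW') k) f w).
  by left; exact: held_promoted.
by right; rewrite (held_unpromoted not_proposed) (iter_da_step_unpromoted not_proposed).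
Qed.

End PromoteFirm.

Local Open Scope ring_scope.

Lemma wutil_le_top (R : realFieldType) (F W : finType) (uW : W -> F -> R)
    (w : W) (f : F) (o : option F) :
  0 <= uW w f -> (forall f', uW w f' <= uW w f) -> wutil uW w o <= uW w f.
Proof. by move=> uW_f_ge0 f_top; case: o => [g|] /=; first exact: f_top. Qed.

Lemma wutil_lt_top (R : realFieldType) (F W : finType) (uW : W -> F -> R)
    (w : W) (f : F) (o : option F) :
  injective (uW w) -> 0 < uW w f -> (forall f', uW w f' <= uW w f) ->
  o != Some f -> wutil uW w o < uW w f.
Proof.
move=> uW_inj uW_f_gt0 f_top; case: o => [g|] //= o_neq.
rewrite lt_neqAle f_top andbT; apply: contra o_neq => /eqP /uW_inj ->.
exact: eqxx.
Qed.

Lemma weighted_sum_lt (R : realFieldType) (I : finType) (p a b : I -> R) (i : I) :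
  (forall j, 0 < p j) -> (forall j, a j <= b j) -> a i < b i ->
  \sum_j p j * a j < \sum_j p j * b j.
Proof.
move=> p_pos le_ab lt_abi.
rewrite [ltLHS](bigD1 i) // [ltRHS](bigD1 i) //= ltr_leD //.
  by rewrite ltr_pM2l.
by apply: ler_sum => j _; rewrite ler_wpM2l // ltW.
Qed.

Theorem lemma1 (R : realFieldType) (F W Th : finType)
    (uF : Th -> F -> W -> R) (uW : W -> F -> R) (Psi : Th -> R)
    (* strict preferences *)
    (HstrF : forall th f, injective (uF th f))
    (HstrW : forall w, injective (uW w))
    (* all pairs mutually acceptable (unmatched utility is 0) *)
    (HaccF : forall th f w, 0 < uF th f w)
    (HaccW : forall w f, 0 < uW w f)
    (* full-support prior *)
    (HPsi_pos : forall th, 0 < Psi th)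
    (HPsi_sum : \sum_(th : Th) Psi th = 1)
    (* each market M(theta) has a unique stable matching *)
    (Huniq : forall th, unique_stable (uF th) uW)
    (sigma : {ffun W -> seq F})
    (Hbne : is_BNE uF uW Psi sigma)
    (th : Th) (f : F) (w : W)
    (HtopF : forall w', uF th f w' <= uF th f w)
    (HtopW : forall f', uW w f' <= uW w f) :
  da_outcome (firm_list (uF th)) sigma w = Some f.
Proof.
have [sigma_uniq no_gain] := Hbne.
apply/eqP/negPn/negP => not_matched.
set sigma' := deviate sigma w (promote f (sigma w)).
have sigma'_w : sigma' w = promote f (sigma w) by rewrite ffunE eqxx.
have sigma'_other v : v != w -> sigma' v = sigma v.
  by move=> /negbTE nvw; rewrite ffunE nvw.
have outcome' t := da_outcome_promoted (firm_list (uF t)) sigma'_w sigma'_other.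
have weak_gain t : wutil uW w (da_outcome (firm_list (uF t)) sigma w) <=
                   wutil uW w (da_outcome (firm_list (uF t)) sigma' w).
  by case: (outcome' t) => ->; first exact: wutil_le_top (ltW (HaccW w f)) HtopW.
have matched' : da_outcome (firm_list (uF th)) sigma' w = Some f.
  have [s list_f] := firm_list_top (HstrF th f) HtopF.
  apply: (held_promoted sigma'_w); apply: (proposed_head list_f).
  by apply: da_final_gt0; rewrite list_f.
have := no_gain w _ (promote_uniq f (sigma_uniq w)); apply/negP; rewrite -ltNge.
rewrite /exp_util -/sigma'; apply: (weighted_sum_lt (i := th) HPsi_pos weak_gain).
by rewrite matched'; exact: wutil_lt_top (HstrW w) (HaccW w f) HtopW not_matched.
Qed.
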